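(* In every proper $4$-colouring of $K$ in which none of the $26$ copies of $H$ in $K$ contains a monochromatic triple, both $J$ and $R(J)$ have their linking vertices coloured according to option (c). In particular, all six linking diagonals are monochromatic, namely $\{L_k,L_{k+3}\}$ and $\{R(L_k),R(L_{k+3})\}$ for $k=0,1,2$.
   Context: Identify $\mathbb{R}^2$ with $\mathbb{C}$. Let $\Lambda=\{a+b e^{i\pi/3}: a,b\in\mathbb{Z}\}$. For $c\in\mathbb{C}$, let $H_c$ be the unit-distance graph on $c$ and $c+e^{i\pi k/3}$, $k=0,\dots,5$. A monochromatic triple in a colouring of a copy of $H$ is a set of three of its $7$ vertices all receiving the same colour. $J$ is the unit-distance graph on the $31$ points of $\Lambda$ of modulus at most $\sqrt7$. It is the union of the $13$ copies $H_c$, $c\in\Lambda$, $|c|\le\sqrt3$. The linking vertices of $J$ are $L_k=2e^{i\pi k/3}$ for $k\in\mathbb{Z}/6$, and a linking diagonal is a pair $\{L_k,L_{k+3}\}$. Given a colouring in which $0$ has colour $\gamma$, the linking vertices are coloured according to option (c) if there is some $k$ such that $L_k$ and $L_{k+3}$ have colour $\gamma$ and the other four linking vertices share a common colour different from $\gamma$. The same notion applies to any rotated copy of $J$ about $0$, using the images of the $L_k$. Let $R$ be the clockwise rotation about $0$ by the angle $2\arcsin(1/4)$; then $|L_k-R(L_k)|=1$. $K$ is the unit-distance graph on the $61$ points of $V(J)\cup R(V(J))$. Its $26$ copies of $H$ are the $H_c$ and the $R(H_c)$ for $c\in\Lambda$, $|c|\le\sqrt3$. *)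

(* points of the plane R^2 = C are pairs (x, y) of Stdlib reals. *)
From Stdlib Require Import Reals Lra Lia ZArith.
Open Scope R_scope.

Definition pt := (R * R)%type.

Definition padd (p q : pt) : pt := (fst p + fst q, snd p + snd q).
Definition pscale (r : R) (p : pt) : pt := (r * fst p, r * snd p).
Definition normsq (p : pt) : R := fst p * fst p + snd p * snd p.
Definition distsq (p q : pt) : R :=
  (fst p - fst q) * (fst p - fst q) + (snd p - snd q) * (snd p - snd q).

Definition unitdir (k : nat) : pt := (cos (INR k * PI / 3), sin (INR k * PI / 3)).

Definition origin : pt := (0, 0).

Definition inLambda (p : pt) : Prop :=
  exists a b : Z, p = padd (IZR a, 0) (pscale (IZR b) (unitdir 1)).

Definition inJ (p : pt) : Prop := inLambda p /\ normsq p <= 7.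

(* centres c of the 13 copies H_c in J: c in Lambda, |c| <= sqrt 3 *)
Definition isCentre (c : pt) : Prop := inLambda c /\ normsq c <= 3.

Definition inH (c p : pt) : Prop :=
  p = c \/ exists k : nat, (k < 6)%nat /\ p = padd c (unitdir k).

(* linking vertices L_k = 2 e^{i pi k/3}  (indices are taken mod 6 automatically,
   since unitdir is 6-periodic in k) *)
Definition L (k : nat) : pt := pscale 2 (unitdir k).

Definition theta : R := 2 * asin (1 / 4).
Definition rot (p : pt) : pt :=
  (fst p * cos theta + snd p * sin theta, - fst p * sin theta + snd p * cos theta).

Definition inK (p : pt) : Prop := inJ p \/ exists q, inJ q /\ p = rot q.

Definition proper4colouringK (col : pt -> nat) : Prop :=
  (forall p, inK p -> (col p < 4)%nat) /\
  (forall p q, inK p -> inK q -> distsq p q = 1 -> col p <> col q).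

Definition hasMonoTriple (col : pt -> nat) (S : pt -> Prop) : Prop :=
  exists p1 p2 p3, S p1 /\ S p2 /\ S p3 /\
    p1 <> p2 /\ p1 <> p3 /\ p2 <> p3 /\ col p1 = col p2 /\ col p1 = col p3.

Definition noMonoTripleInCopies (col : pt -> nat) : Prop :=
  forall c, isCentre c ->
    ~ hasMonoTriple col (inH c) /\
    ~ hasMonoTriple col (fun p => exists q, inH c q /\ p = rot q).

(* option (c) for linking vertices f k (f = L for J, f = rot o L for R(J));
   gamma = colour of the centre 0 *)
Definition optionC (col : pt -> nat) (f : nat -> pt) : Prop :=
  exists k : nat, (k < 6)%nat /\
    col (f k) = col origin /\ col (f (k + 3)%nat) = col origin /\
    exists delta : nat, delta <> col origin /\
      col (f (k + 1)%nat) = delta /\ col (f (k + 2)%nat) = delta /\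
      col (f (k + 4)%nat) = delta /\ col (f (k + 5)%nat) = delta.

(* The rotation R is an isometry fixing 0, so both [col] and [col o R] restrict to proper
   4-colourings of J without monochromatic triples in its 13 copies of H.  For any such
   colouring of J, with gamma the colour of 0, the linking vertices follow one of three
   patterns: (a) all coloured gamma; (b) four consecutive ones coloured gamma and the other
   two equal; (c).  Since L_k and R(L_k) are at unit distance, the gamma-coloured linking
   vertices of J and of R(J) have disjoint index sets; pattern (a) or (b) on one side leaves
   no room for the two opposite gamma-coloured vertices required on the other, so both sides
   follow (c), whose diagonals are monochromatic.  Both case analyses are exhaustive
   backtracking searches, certified by reflection. *)

From Stdlib Require Import Reals Lra Lia ZArith List Bool Arith.
Import ListNotations.
Open Scope R_scope.

Definition lat (p : Z * Z) : pt := padd (IZR (fst p), 0) (pscale (IZR (snd p)) (unitdir 1)).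

Definition enorm (p : Z * Z) : Z := (fst p * fst p + fst p * snd p + snd p * snd p)%Z.
Definition zadd (p q : Z * Z) : Z * Z := (fst p + fst q, snd p + snd q)%Z.
Definition zsub (p q : Z * Z) : Z * Z := (fst p - fst q, snd p - snd q)%Z.
Definition zscale (n : Z) (p : Z * Z) : Z * Z := (n * fst p, n * snd p)%Z.

(* Multiplication by [e^{i pi/3}] in the basis [1, e^{i pi/3}]: [e^{2 i pi/3} = e^{i pi/3} - 1]. *)
Definition rot60 (p : Z * Z) : Z * Z := (- snd p, fst p + snd p)%Z.
Definition dir (k : nat) : Z * Z := Nat.iter k rot60 (1, 0)%Z.

Lemma sqrt3_sq : sqrt 3 ^ 2 = 3.
Proof. rewrite <- Rsqr_pow2; apply Rsqr_sqrt; lra. Qed.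

Ltac sqrt3_ring := field_simplify; rewrite ?sqrt3_sq; field.

Lemma lat_coords p : lat p = (IZR (fst p) + IZR (snd p) / 2, IZR (snd p) * (sqrt 3 / 2)).
Proof.
  unfold lat, unitdir, padd, pscale; simpl.
  rewrite Rmult_1_l, cos_PI3, sin_PI3; f_equal; field.
Qed.

Lemma lat_inLambda p : inLambda (lat p).
Proof. exists (fst p), (snd p); reflexivity. Qed.

Lemma lat_origin : lat (0, 0)%Z = origin.
Proof. rewrite lat_coords; unfold origin; simpl; f_equal; lra. Qed.

Lemma lat_add p q : padd (lat p) (lat q) = lat (zadd p q).
Proof. rewrite !lat_coords; unfold padd; simpl; rewrite !plus_IZR; f_equal; field. Qed.

Lemma lat_rot60 p :
  lat (rot60 p) =
  (fst (lat p) * cos (PI / 3) - snd (lat p) * sin (PI / 3),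
   fst (lat p) * sin (PI / 3) + snd (lat p) * cos (PI / 3)).
Proof.
  rewrite !lat_coords, cos_PI3, sin_PI3; simpl; rewrite opp_IZR, plus_IZR.
  f_equal; sqrt3_ring.
Qed.

Lemma unitdir_lat k : unitdir k = lat (dir k).
Proof.
  induction k as [|k IH].
  - unfold unitdir; simpl; rewrite lat_coords; simpl.
    replace (0 * PI / 3) with 0 by field; rewrite cos_0, sin_0; f_equal; lra.
  - unfold dir; rewrite Nat.iter_succ; fold (dir k); rewrite lat_rot60, <- IH.
    unfold unitdir; rewrite S_INR; simpl.
    replace ((INR k + 1) * PI / 3) with (INR k * PI / 3 + PI / 3) by field.
    rewrite cos_plus, sin_plus; f_equal; ring.
Qed.

Lemma distsq_lat p q : distsq (lat p) (lat q) = IZR (enorm (zsub p q)).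
Proof.
  rewrite !lat_coords; unfold distsq, enorm, zsub; simpl.
  rewrite !plus_IZR, !mult_IZR, !minus_IZR; sqrt3_ring.
Qed.

Lemma normsq_lat p : normsq (lat p) = IZR (enorm p).
Proof.
  rewrite lat_coords; unfold normsq, enorm; simpl.
  rewrite !plus_IZR, !mult_IZR; sqrt3_ring.
Qed.

Lemma lat_inj p q : lat p = lat q -> p = q.
Proof.
  rewrite !lat_coords; intros E; injection E as E1 E2.
  assert (Hs : 0 < sqrt 3) by (apply sqrt_lt_R0; lra).
  assert (Hb : snd p = snd q) by (apply eq_IZR; nra).
  assert (Ha : fst p = fst q) by (apply eq_IZR; rewrite Hb in E1; lra).
  destruct p, q; simpl in *; congruence.
Qed.

Lemma enorm_dir k : enorm (dir k) = 1%Z.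
Proof.
  induction k as [|k IH]; [reflexivity|].
  unfold dir; rewrite Nat.iter_succ; fold (dir k).
  destruct (dir k) as [a b]; unfold enorm, rot60 in *; simpl in *; lia.
Qed.

Lemma dir_add6 k : dir (6 + k) = dir k.
Proof.
  unfold dir; rewrite Nat.iter_add; fold (dir k).
  destruct (dir k) as [a b]; unfold rot60; simpl; f_equal; ring.
Qed.

Lemma L_lat k : L k = lat (zscale 2 (dir k)).
Proof.
  unfold L; rewrite unitdir_lat, !lat_coords; unfold pscale, zscale; cbn [fst snd].
  rewrite !mult_IZR; f_equal; field.
Qed.

Lemma L_mod k : L k = L (k mod 6).
Proof.
  rewrite !L_lat; f_equal; f_equal.
  rewrite (Nat.div_mod_eq k 6) at 1; induction (k / 6)%nat as [|n IH]; [f_equal; lia|].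
  now replace (6 * S n + k mod 6)%nat with (6 + (6 * n + k mod 6))%nat by lia; rewrite dir_add6.
Qed.

Lemma inJ_lat p : (enorm p <= 7)%Z -> inJ (lat p).
Proof. split; [apply lat_inLambda | rewrite normsq_lat; now apply IZR_le]. Qed.

Lemma isCentre_lat p : (enorm p <= 3)%Z -> isCentre (lat p).
Proof. split; [apply lat_inLambda | rewrite normsq_lat; now apply IZR_le]. Qed.

Lemma normsq_L k : normsq (L k) = 4.
Proof.
  rewrite L_lat, normsq_lat; pose proof (enorm_dir k).
  destruct (dir k); unfold enorm, zscale in *; cbn [fst snd] in *.
  replace 4 with (IZR 4) by reflexivity; f_equal; lia.
Qed.

Lemma inJ_L k : inJ (L k).
Proof. split; [rewrite L_lat; apply lat_inLambda | rewrite normsq_L; lra]. Qed.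

Lemma inJ_origin : inJ origin.
Proof. rewrite <- lat_origin; apply inJ_lat; discriminate. Qed.

Lemma cos_theta : cos theta = 7 / 8.
Proof. unfold theta; rewrite cos_2a_sin, sin_asin by lra; lra. Qed.

Lemma cos2_sin2_theta : cos theta * cos theta + sin theta * sin theta = 1.
Proof. pose proof (sin2_cos2 theta); unfold Rsqr in *; lra. Qed.

Lemma distsq_rot p q : distsq (rot p) (rot q) = distsq p q.
Proof.
  destruct p as [x y], q as [u v]; unfold distsq, rot; simpl.
  transitivity (((x - u) * (x - u) + (y - v) * (y - v))
                * (cos theta * cos theta + sin theta * sin theta)); [ring|].
  rewrite cos2_sin2_theta; ring.
Qed.

Lemma distsq_rot_self p : distsq p (rot p) = normsq p / 4.
Proof.
  destruct p as [x y]; unfold distsq, normsq, rot; simpl.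
  transitivity ((x * x + y * y)
                * (1 - 2 * cos theta + (cos theta * cos theta + sin theta * sin theta))); [ring|].
  rewrite cos2_sin2_theta, cos_theta; field.
Qed.

Lemma distsq_eq0 p q : distsq p q = 0 -> p = q.
Proof.
  destruct p as [x y], q as [u v]; unfold distsq; simpl; intros H.
  destruct (Rplus_sqr_eq_0 (x - u) (y - v) H); f_equal; lra.
Qed.

Lemma rot_inj p q : rot p = rot q -> p = q.
Proof. intros E; apply distsq_eq0; rewrite <- distsq_rot, E; unfold distsq; ring. Qed.

Lemma rot_origin : rot origin = origin.
Proof. unfold rot, origin; simpl; f_equal; ring. Qed.

Lemma distsq_L_rot k : distsq (L k) (rot (L k)) = 1.
Proof. rewrite distsq_rot_self, normsq_L; lra. Qed.

Local Open Scope nat_scope.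

Record constraint := Constraint { scope : list nat; test : list nat -> bool }.

Definition holds (f : nat -> nat) (c : constraint) : bool := test c (map f (scope c)).

Definition schedule (n : nat) (cs : list constraint) : list (list constraint) :=
  map (fun k => filter (fun c => list_max (scope c) =? k) cs) (seq 0 n).

(* A constraint is checked as soon as its last variable is coloured; the [if] (not [implb],
   whose arguments [vm_compute] evaluates eagerly) is what prunes the search. *)
Fixpoint search (q : nat) (tbl : list (list constraint)) (goal : list nat -> bool)
    (fuel : nat) (env : list nat) : bool :=
  match fuel with
  | 0 => goal env
  | S m =>
      forallb (fun v => let env' := env ++ [v] in
        if forallb (holds (fun i => nth i env' 0)) (nth (length env) tbl [])
        then search q tbl goal m env' else true) (seq 0 q)
  end.

Definition search_all (q n : nat) (cs : list constraint) (goal : list nat -> bool) : bool :=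
  search q (schedule n cs) goal n [].

Lemma nth_map_seq {A} (f : nat -> A) n i d : i < n -> nth i (map f (seq 0 n)) d = f i.
Proof.
  intros Hi; rewrite nth_indep with (d' := f 0) by now rewrite length_map, length_seq.
  now rewrite map_nth, seq_nth.
Qed.

Lemma holds_prefix f n c :
  list_max (scope c) < n -> holds (fun i => nth i (map f (seq 0 n)) 0) c = holds f c.
Proof.
  intros Hc; unfold holds; f_equal; apply map_ext_in; intros i Hi.
  apply nth_map_seq.
  assert (Hmax : Forall (fun k => k <= list_max (scope c)) (scope c)) by now apply list_max_le.
  rewrite Forall_forall in Hmax; specialize (Hmax i Hi); lia.
Qed.

Lemma in_schedule n cs k c :
  k < n -> In c (nth k (schedule n cs) []) -> In c cs /\ list_max (scope c) = k.
Proof.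
  intros Hk Hin; unfold schedule in Hin; rewrite nth_map_seq in Hin by assumption.
  apply filter_In in Hin as [Hin Hk']; split; [assumption | now apply Nat.eqb_eq].
Qed.

Lemma search_all_sound q n cs goal f :
  search_all q n cs goal = true ->
  (forall i, i < n -> f i < q) ->
  (forall c, In c cs -> list_max (scope c) < n -> holds f c = true) ->
  goal (map f (seq 0 n)) = true.
Proof.
  intros Hsearch Hf Hcs.
  enough (Hgen : forall m k, k + m = n ->
            search q (schedule n cs) goal m (map f (seq 0 k)) = true ->
            goal (map f (seq 0 n)) = true) by exact (Hgen n 0 eq_refl Hsearch).
  induction m as [|m IH]; intros k Hkm Hk.
  - now replace n with k by lia.
  - apply (IH (S k)); [lia|].
    cbn [search] in Hk; rewrite forallb_forall in Hk.
    specialize (Hk (f k) ltac:(apply in_seq; specialize (Hf k); lia)).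
    rewrite length_map, length_seq in Hk.
    replace (map f (seq 0 k) ++ [f k]) with (map f (seq 0 (S k))) in Hk
      by now rewrite seq_S, map_app.
    destruct (forallb _ _) eqn:Hcheck; [assumption|].
    exfalso; apply Bool.not_true_iff_false in Hcheck; apply Hcheck, forallb_forall.
    intros c Hc; apply in_schedule in Hc as [Hc Hmax]; [|lia].
    rewrite holds_prefix by lia; apply Hcs; [assumption | lia].
Qed.

Definition at6 (ls : list nat) (j : nat) : nat := nth (j mod 6) ls 0.
Definition optionAb (o : nat) (ls : list nat) : bool := forallb (fun j => at6 ls j =? o) (seq 0 6).
Definition optionBb (o : nat) (ls : list nat) : bool :=
  existsb (fun k => negb (at6 ls k =? o) && (at6 ls (k + 1) =? at6 ls k)
                    && forallb (fun m => at6 ls (k + m) =? o) [2; 3; 4; 5]) (seq 0 6).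
Definition optionCb (o : nat) (ls : list nat) : bool :=
  existsb (fun k => (at6 ls k =? o) && (at6 ls (k + 3) =? o) && negb (at6 ls (k + 1) =? o)
                    && forallb (fun m => at6 ls (k + m) =? at6 ls (k + 1)) [2; 4; 5]) (seq 0 6).
Definition linking_optionb (o : nat) (ls : list nat) : bool :=
  optionAb o ls || optionBb o ls || optionCb o ls.

(* The vertices of J, roughly outward from 0: this is the variable order of the search. *)
Definition J_vertices : list (Z * Z) :=
  [(0, 0); (1, 0); (0, 1); (-1, 1); (-1, 0); (0, -1); (1, -1); (2, 0); (1, 1); (2, -1);
   (0, 2); (-1, 2); (-2, 2); (-2, 1); (-2, 0); (-1, -1); (0, -2); (1, -2); (2, -2); (2, 1);
   (3, -1); (1, 2); (3, -2); (-1, 3); (-2, 3); (-3, 2); (-3, 1); (-2, -1); (-1, -2); (1, -3);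
   (2, -3)]%Z.
Definition vtx (i : nat) : Z * Z := nth i J_vertices (0, 0)%Z.
Definition J_linking_idx : list nat := [7; 10; 12; 14; 16; 18].

Definition zeqb (p q : Z * Z) : bool := Z.eqb (fst p) (fst q) && Z.eqb (snd p) (snd q).
Definition in_copyb (c p : Z * Z) : bool :=
  zeqb p c || existsb (fun k => zeqb p (zadd c (dir k))) (seq 0 6).

Definition pairs (n : nat) : list (nat * nat) :=
  flat_map (fun i => map (fun j => (i, j)) (seq (S i) (n - S i))) (seq 0 n).
Definition triples (n : nat) : list (nat * nat * nat) :=
  flat_map (fun '(i, j) => map (fun k => (i, j, k)) (seq (S j) (n - S j))) (pairs n).

Definition J_edges : list (nat * nat) :=
  filter (fun '(i, j) => Z.eqb (enorm (zsub (vtx i) (vtx j))) 1) (pairs 31).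
Definition J_triples : list (nat * nat * nat) :=
  filter (fun '(i, j, k) =>
    negb (zeqb (vtx i) (vtx j)) && negb (zeqb (vtx i) (vtx k)) && negb (zeqb (vtx j) (vtx k))
    && existsb (fun c => Z.leb (enorm c) 3 && in_copyb c (vtx i) && in_copyb c (vtx j)
                         && in_copyb c (vtx k)) J_vertices) (triples 31).

Definition distinct_at (i j : nat) : constraint :=
  Constraint [i; j] (fun xs => match xs with [x; y] => negb (x =? y) | _ => true end).
Definition not_mono_at (i j k : nat) : constraint :=
  Constraint [i; j; k]
    (fun xs => match xs with [x; y; z] => negb ((x =? y) && (x =? z)) | _ => true end).

Definition J_constraints : list constraint :=
  map (fun '(i, j) => distinct_at i j) J_edges
  ++ map (fun '(i, j, k) => not_mono_at i j k) J_triples.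

Definition J_goal (env : list nat) : bool :=
  linking_optionb (nth 0 env 0) (map (fun i => nth i env 0) J_linking_idx).

(* Makes the kernel unfold these names, instead of evaluating [filter] and [++], when it
   checks the membership lemmas below. *)
Strategy expand [J_constraints J_edges J_triples].

Lemma J_search : search_all 4 31 J_constraints J_goal = true.
Proof. vm_compute; reflexivity. Qed.

Lemma J_vertices_in_J : forallb (fun p => Z.leb (enorm p) 7) J_vertices = true.
Proof. reflexivity. Qed.

Lemma J_linking_vertices : map vtx J_linking_idx = map (fun k => zscale 2 (dir k)) (seq 0 6).
Proof. reflexivity. Qed.

Lemma inJ_vtx i : inJ (lat (vtx i)).
Proof.
  unfold vtx; destruct (nth_in_or_default i J_vertices (0, 0)%Z) as [Hin | ->].
  - apply inJ_lat, Z.leb_le.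
    pose proof J_vertices_in_J as Hall; rewrite forallb_forall in Hall; exact (Hall _ Hin).
  - apply inJ_lat; discriminate.
Qed.

Lemma zeqb_spec p q : zeqb p q = true <-> p = q.
Proof.
  destruct p as [a b], q as [c d]; unfold zeqb; simpl.
  rewrite andb_true_iff, !Z.eqb_eq; split; [intros [-> ->] | intros E; injection E]; auto.
Qed.

Lemma lat_zeqb p q : zeqb p q = false -> lat p <> lat q.
Proof. intros Hpq E; apply lat_inj, zeqb_spec in E; congruence. Qed.

Lemma in_copyb_inH c p : in_copyb c p = true -> inH (lat c) (lat p).
Proof.
  unfold in_copyb; intros [H | H]%orb_true_iff.
  - left; f_equal; now apply zeqb_spec.
  - apply existsb_exists in H as [k [Hk H]]; apply zeqb_spec in H as ->.
    right; exists k; split; [now apply in_seq in Hk | now rewrite unitdir_lat, lat_add].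
Qed.

Definition admissible_on_J (g : pt -> nat) : Prop :=
  (forall p, inJ p -> g p < 4) /\
  (forall p q, inJ p -> inJ q -> distsq p q = 1%R -> g p <> g q) /\
  (forall c, isCentre c -> ~ hasMonoTriple g (inH c)).

Lemma J_constraints_hold g :
  admissible_on_J g -> forall c, In c J_constraints -> holds (fun i => g (lat (vtx i))) c = true.
Proof.
  intros (_ & Hproper & Hmono) c Hc; set (f := fun i => g (lat (vtx i))).
  unfold J_constraints, J_edges, J_triples in Hc.
  apply in_app_or in Hc as [Hc | Hc]; apply in_map_iff in Hc as [x [<- Hx]];
    apply filter_In in Hx as [_ Hx].
  - destruct x as [i j]; cbv beta iota in Hx; change (negb (f i =? f j) = true).
    apply negb_true_iff, Nat.eqb_neq, Hproper; try apply inJ_vtx.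
    rewrite distsq_lat; apply Z.eqb_eq in Hx; now rewrite Hx.
  - destruct x as [[i j] k]; cbv beta iota in Hx.
    change (negb ((f i =? f j) && (f i =? f k)) = true).
    apply andb_true_iff in Hx as [Hx Hcentre].
    apply andb_true_iff in Hx as [Hx Hjk]; apply andb_true_iff in Hx as [Hij Hik].
    apply negb_true_iff in Hij, Hik, Hjk.
    apply existsb_exists in Hcentre as [c [_ Hcentre]].
    apply andb_true_iff in Hcentre as [Hcentre Hk]; apply andb_true_iff in Hcentre as [Hcentre Hj].
    apply andb_true_iff in Hcentre as [Hc Hi]; apply Z.leb_le in Hc.
    apply negb_true_iff, Bool.not_true_iff_false; intros [E1 E2]%andb_true_iff.
    apply Nat.eqb_eq in E1, E2.
    apply (Hmono (lat c)); [now apply isCentre_lat|].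
    exists (lat (vtx i)), (lat (vtx j)), (lat (vtx k)).
    repeat split; try apply in_copyb_inH; try apply lat_zeqb; assumption.
Qed.

Lemma J_linking g :
  admissible_on_J g -> linking_optionb (g origin) (map (fun k => g (L k)) (seq 0 6)) = true.
Proof.
  intros Hg; set (f := fun i => g (lat (vtx i))).
  assert (Hgoal := search_all_sound 4 31 J_constraints J_goal f J_search).
  unfold J_goal in Hgoal; rewrite nth_map_seq in Hgoal by lia.
  rewrite (map_ext_in _ f) in Hgoal
    by (intros i Hi; apply nth_map_seq; simpl in Hi; lia).
  replace (map (fun k => g (L k)) (seq 0 6)) with (map f J_linking_idx).
  - rewrite <- lat_origin; apply Hgoal.
    + intros i _; apply Hg, inJ_vtx.
    + intros c Hc _; now apply J_constraints_hold.
  - unfold f; rewrite <- (map_map vtx (fun p => g (lat p))), J_linking_vertices, map_map.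
    apply map_ext; intros k; now rewrite L_lat.
Qed.

Definition linking_at (o : nat) (idx : list nat) : constraint :=
  Constraint (o :: idx) (fun xs => linking_optionb (hd 0 xs) (tl xs)).

Definition JR_constraints : list constraint :=
  [linking_at 0 (seq 1 6); linking_at 0 (seq 7 6)]
  ++ map (fun k => distinct_at (1 + k) (7 + k)) (seq 0 6).

Definition JR_goal (env : list nat) : bool :=
  optionCb (hd 0 env) (firstn 6 (tl env)) && optionCb (hd 0 env) (skipn 7 env).

Lemma JR_search : search_all 4 13 JR_constraints JR_goal = true.
Proof. vm_compute; reflexivity. Qed.

Lemma linking_options_forced (o : nat) (l r : nat -> nat) :
  o < 4 -> (forall j, j < 6 -> l j < 4 /\ r j < 4) ->
  linking_optionb o (map l (seq 0 6)) = true ->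
  linking_optionb o (map r (seq 0 6)) = true ->
  (forall j, j < 6 -> l j <> r j) ->
  optionCb o (map l (seq 0 6)) = true /\ optionCb o (map r (seq 0 6)) = true.
Proof.
  intros Ho Hlr Hl Hr Hdist.
  set (f := fun i => if i =? 0 then o else if i <=? 6 then l (i - 1) else r (i - 7)).
  apply andb_true_iff; change (JR_goal (map f (seq 0 13)) = true).
  apply (search_all_sound 4 13 JR_constraints JR_goal f JR_search).
  - intros i Hi; unfold f.
    destruct (Nat.eqb_spec i 0); [assumption|].
    destruct (Nat.leb_spec i 6); apply Hlr; lia.
  - intros c Hc _; simpl in Hc; repeat destruct Hc as [<- | Hc]; try contradiction;
      [exact Hl | exact Hr | apply negb_true_iff, Nat.eqb_neq, Hdist; lia ..].
Qed.

Lemma at6_map_seq (l : nat -> nat) j :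
  (forall j, l j = l (j mod 6)) -> at6 (map l (seq 0 6)) j = l j.
Proof.
  intros Hper; unfold at6; rewrite nth_map_seq by (apply Nat.mod_upper_bound; lia).
  now rewrite <- Hper.
Qed.

Lemma optionCb_spec (o : nat) (l : nat -> nat) :
  (forall j, l j = l (j mod 6)) -> optionCb o (map l (seq 0 6)) = true ->
  exists k, k < 6 /\ l k = o /\ l (k + 3) = o /\
    exists d, d <> o /\ l (k + 1) = d /\ l (k + 2) = d /\ l (k + 4) = d /\ l (k + 5) = d.
Proof.
  intros Hper Hc; apply existsb_exists in Hc as [k [Hk Hc]]; apply in_seq in Hk.
  cbn [forallb] in Hc; rewrite !at6_map_seq in Hc by assumption.
  rewrite !andb_true_iff, negb_true_iff, !Nat.eqb_eq, Nat.eqb_neq in Hc.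
  destruct Hc as (((Hk0 & Hk3) & Hk1) & Hk2 & Hk4 & Hk5 & _).
  exists k; repeat split; try (assumption || lia).
  exists (l (k + 1)); repeat split; auto.
Qed.

Lemma optionCb_diagonal o ls k : optionCb o ls = true -> k < 3 -> at6 ls k = at6 ls (k + 3).
Proof.
  intros Hc Hk; apply existsb_exists in Hc as [k0 [Hk0 Hc]]; apply in_seq in Hk0.
  unfold at6 in *.
  destruct k0 as [|[|[|[|[|[|k0]]]]]]; try lia; destruct k as [|[|[|k]]]; try lia;
    simpl in Hc |- *; rewrite !andb_true_iff, negb_true_iff, !Nat.eqb_eq, Nat.eqb_neq in Hc; lia.
Qed.

Lemma hasMonoTriple_rot col c :
  hasMonoTriple (fun p => col (rot p)) (inH c) ->
  hasMonoTriple col (fun p => exists q, inH c q /\ p = rot q).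
Proof.
  intros (p1 & p2 & p3 & H1 & H2 & H3 & H12 & H13 & H23 & E2 & E3).
  exists (rot p1), (rot p2), (rot p3).
  repeat split; eauto; intros E%rot_inj; contradiction.
Qed.

Lemma admissible_on_J_col col :
  proper4colouringK col -> noMonoTripleInCopies col -> admissible_on_J col.
Proof.
  intros [Hcol Hproper] Hmono; repeat split.
  - intros p Hp; apply Hcol; now left.
  - intros p q Hp Hq; apply Hproper; now left.
  - intros c Hc; apply Hmono, Hc.
Qed.

Lemma admissible_on_J_rot col :
  proper4colouringK col -> noMonoTripleInCopies col -> admissible_on_J (fun p => col (rot p)).
Proof.
  intros [Hcol Hproper] Hmono; repeat split.
  - intros p Hp; apply Hcol; right; now exists p.
  - intros p q Hp Hq Hpq; apply Hproper; [right; now exists p | right; now exists q |].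
    now rewrite distsq_rot.
  - intros c Hc H%hasMonoTriple_rot; now apply (Hmono c Hc).
Qed.

Local Open Scope R_scope.

Theorem mainTheorem4 (col : pt -> nat) :
  proper4colouringK col ->
  noMonoTripleInCopies col ->
  (optionC col L /\ optionC col (fun k => rot (L k))) /\
  (forall k : nat, (k < 3)%nat ->
     col (L k) = col (L (k + 3)%nat) /\
     col (rot (L k)) = col (rot (L (k + 3)%nat))).
Proof.
  intros Hcol Hmono.
  set (lJ := fun k => col (L k)); set (lR := fun k => col (rot (L k))).
  assert (HperJ : forall j, lJ j = lJ (j mod 6)) by (intros j; unfold lJ; now rewrite <- L_mod).
  assert (HperR : forall j, lR j = lR (j mod 6)) by (intros j; unfold lR; now rewrite <- L_mod).
  assert (HJ := J_linking _ (admissible_on_J_col col Hcol Hmono)).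
  assert (HR := J_linking _ (admissible_on_J_rot col Hcol Hmono)).
  cbv beta in HR; rewrite rot_origin in HR.
  destruct Hcol as [Hcol Hproper].
  destruct (linking_options_forced (col origin) lJ lR) as [HcJ HcR].
  { apply Hcol; left; apply inJ_origin. }
  { intros j _; split; apply Hcol; [left | right; exists (L j); split]; auto using inJ_L. }
  { exact HJ. }
  { exact HR. }
  { intros j _; apply Hproper; [left | right; exists (L j); split |];
      auto using inJ_L, distsq_L_rot. }
  split; [split|].
  - exact (optionCb_spec _ _ HperJ HcJ).
  - exact (optionCb_spec _ _ HperR HcR).
  - intros k Hk; change (lJ k = lJ (k + 3)%nat /\ lR k = lR (k + 3)%nat).
    rewrite <- !(at6_map_seq lJ), <- !(at6_map_seq lR) by assumption.
    split; apply optionCb_diagonal with (o := col origin); assumption.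
Qed.
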